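(* Let $\mathcal{H}$ be a complex Hilbert space and let $R\in\mathbb{B}(\mathcal{H})$ be invertible (with bounded inverse). If $D(R)\le \|R^{-1}\|^{-2}$, then $\|R\|\le\sqrt{2}\,\omega(R)$.
   Context: $\mathbb{B}(\mathcal{H})$ denotes the bounded linear operators on $\mathcal{H}$. $\omega(R)=\sup\{|\langle Rx,x\rangle| : \|x\|=1\}$ is the numerical radius, $\|R\|$ the operator norm, and $D(R)=2\min(\|R_1\|^2,\|R_2\|^2)$ where $R_1=\frac{R+R^*}{2}$, $R_2=\frac{R-R^*}{2i}$. *)

From Stdlib Require Import Reals.
Open Scope R_scope.

Definition C : Type := (R * R)%type.
Definition Cre (z : C) : R := fst z.
Definition Cim (z : C) : R := snd z.
Definition C0 : C := (0, 0).
Definition C1 : C := (1, 0).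
Definition Ci : C := (0, 1).
Definition RtoC (r : R) : C := (r, 0).
Definition Cadd (z w : C) : C := (fst z + fst w, snd z + snd w).
Definition Cmul (z w : C) : C :=
  (fst z * fst w - snd z * snd w, fst z * snd w + snd z * fst w).
Definition Cconj (z : C) : C := (fst z, - snd z).
Definition Cmod (z : C) : R := sqrt (fst z ^ 2 + snd z ^ 2).
Definition Cinv (z : C) : C :=
  (fst z / (fst z ^ 2 + snd z ^ 2), - snd z / (fst z ^ 2 + snd z ^ 2)).

(** Complex inner product spaces.  Convention: the inner product is linear in
    the first argument and conjugate-linear in the second. *)
Record PreHilbert := {
  carrier :> Type;
  vzero : carrier;
  vadd : carrier -> carrier -> carrier;
  vopp : carrier -> carrier;
  vscal : C -> carrier -> carrier;
  inner : carrier -> carrier -> C;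
  vadd_assoc : forall x y z, vadd x (vadd y z) = vadd (vadd x y) z;
  vadd_comm : forall x y, vadd x y = vadd y x;
  vadd_0 : forall x, vadd x vzero = x;
  vadd_opp : forall x, vadd x (vopp x) = vzero;
  vscal_1 : forall x, vscal C1 x = x;
  vscal_assoc : forall a b x, vscal a (vscal b x) = vscal (Cmul a b) x;
  vscal_distr_v : forall a x y, vscal a (vadd x y) = vadd (vscal a x) (vscal a y);
  vscal_distr_s : forall a b x, vscal (Cadd a b) x = vadd (vscal a x) (vscal b x);
  inner_add_l : forall x y z, inner (vadd x y) z = Cadd (inner x z) (inner y z);
  inner_scal_l : forall a x y, inner (vscal a x) y = Cmul a (inner x y);
  inner_conj_sym : forall x y, inner y x = Cconj (inner x y);
  inner_pos : forall x, 0 <= Cre (inner x x);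
  inner_definite : forall x, inner x x = C0 -> x = vzero
}.

Arguments vzero {_}.
Arguments vadd {_} _ _.
Arguments vopp {_} _.
Arguments vscal {_} _ _.
Arguments inner {_} _ _.

Definition vnorm {H : PreHilbert} (x : H) : R := sqrt (Cre (inner x x)).
Definition vsub {H : PreHilbert} (x y : H) : H := vadd x (vopp y).

Definition complete (H : PreHilbert) : Prop :=
  forall u : nat -> H,
    (forall eps, eps > 0 -> exists N, forall m n, (m >= N)%nat -> (n >= N)%nat ->
        vnorm (vsub (u m) (u n)) < eps) ->
    exists l : H, forall eps, eps > 0 -> exists N, forall n, (n >= N)%nat ->
        vnorm (vsub (u n) l) < eps.

Definition is_linear {H : PreHilbert} (T : H -> H) : Prop :=
  (forall x y, T (vadd x y) = vadd (T x) (T y)) /\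
  (forall a x, T (vscal a x) = vscal a (T x)).

Definition is_bounded {H : PreHilbert} (T : H -> H) : Prop :=
  exists M : R, forall x, vnorm (T x) <= M * vnorm x.

Definition bounded_op {H : PreHilbert} (T : H -> H) : Prop :=
  is_linear T /\ is_bounded T.

Definition is_adjoint {H : PreHilbert} (T T' : H -> H) : Prop :=
  forall x y, inner (T x) y = inner x (T' y).

Definition is_opnorm {H : PreHilbert} (T : H -> H) (n : R) : Prop :=
  is_lub (fun r => exists x : H, vnorm x = 1 /\ r = vnorm (T x)) n.

Definition is_numrad {H : PreHilbert} (T : H -> H) (w : R) : Prop :=
  is_lub (fun r => exists x : H, vnorm x = 1 /\ r = Cmod (inner (T x) x)) w.

(** Cartesian decomposition: R1 = (R + adj R) / 2, R2 = (R - adj R) / (2i). *)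
Definition realpart {H : PreHilbert} (T Ts : H -> H) : H -> H :=
  fun x => vscal (RtoC (/ 2)) (vadd (T x) (Ts x)).
Definition imagpart {H : PreHilbert} (T Ts : H -> H) : H -> H :=
  fun x => vscal (Cinv (Cmul (RtoC 2) Ci)) (vsub (T x) (Ts x)).

(** For a unit vector x, ‖Rx‖² + ‖R*x‖² = 2‖R₁x‖² + 2‖R₂x‖².  The parts R₁, R₂
    are self-adjoint with numerical radius at most ω(R), hence ‖Rⱼx‖ ≤ ω(R);
    one of them is moreover bounded by its own norm, so the right-hand side is
    at most 2ω(R)² + D(R).  Finally 1 = ⟨R⁻¹x, R*x⟩ gives ‖R*x‖ ≥ ‖R⁻¹‖⁻¹, and
    the hypothesis D(R) ≤ ‖R⁻¹‖⁻² leaves ‖Rx‖² ≤ 2ω(R)². *)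

From Pilot Require Import Defs.
From Stdlib Require Import Reals Lra.
Open Scope R_scope.

Lemma Cmod_bounds_fst (c : Defs.C) : - Cmod c <= fst c <= Cmod c.
Proof.
  unfold Cmod. pose proof (sqrt_pos (fst c ^ 2 + snd c ^ 2)).
  pose proof (sqrt_sqrt (fst c ^ 2 + snd c ^ 2)). nra.
Qed.

Lemma Cmod_bounds_snd (c : Defs.C) : - Cmod c <= snd c <= Cmod c.
Proof.
  unfold Cmod. pose proof (sqrt_pos (fst c ^ 2 + snd c ^ 2)).
  pose proof (sqrt_sqrt (fst c ^ 2 + snd c ^ 2)). nra.
Qed.

Lemma le_sqr_of_forall_quadratic (a w : R) : 0 <= a -> 0 <= w ->
  (forall t, 2 * t * a <= w * (1 + t ^ 2 * a)) -> a <= w ^ 2.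
Proof.
  intros a_ge0 w_ge0 hq. destruct (Req_dec w 0) as [->|w_neq0].
  - specialize (hq 1). nra.
  - specialize (hq (/ w)).
    assert (h : 2 * / w * a * w <= w * (1 + (/ w) ^ 2 * a) * w)
      by (apply Rmult_le_compat_r; lra).
    replace (2 * / w * a * w) with (2 * a) in h by (field; lra).
    replace (w * (1 + (/ w) ^ 2 * a) * w) with (w ^ 2 + a) in h by (field; lra).
    lra.
Qed.

Lemma inv_le_of_forall_quadratic (b c : R) : 0 <= b ->
  (forall s, 0 < s -> 2 * s <= s ^ 2 * b + c) -> / b <= c.
Proof.
  intros b_ge0 hq. destruct (Req_dec b 0) as [->|b_neq0].
  - exfalso. specialize (hq (Rabs c + 1)).
    pose proof (Rle_abs c). pose proof (Rabs_pos c). nra.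
  - specialize (hq (/ b) (Rinv_0_lt_compat b ltac:(lra))).
    replace ((/ b) ^ 2 * b) with (/ b) in hq by (field; lra). lra.
Qed.

Section InnerProduct.
Context {H : PreHilbert}.

Lemma re_inner_sym (x y : H) : fst (inner y x) = fst (inner x y).
Proof. rewrite inner_conj_sym. reflexivity. Qed.

Lemma im_inner_sym (x y : H) : snd (inner y x) = - snd (inner x y).
Proof. rewrite inner_conj_sym. reflexivity. Qed.

Lemma re_inner_addl (x y z : H) :
  fst (inner (vadd x y) z) = fst (inner x z) + fst (inner y z).
Proof. rewrite inner_add_l. reflexivity. Qed.

Lemma im_inner_addl (x y z : H) :
  snd (inner (vadd x y) z) = snd (inner x z) + snd (inner y z).
Proof. rewrite inner_add_l. reflexivity. Qed.

Lemma re_inner_addr (x y z : H) :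
  fst (inner z (vadd x y)) = fst (inner z x) + fst (inner z y).
Proof. rewrite !(re_inner_sym _ z). apply re_inner_addl. Qed.

Lemma im_inner_addr (x y z : H) :
  snd (inner z (vadd x y)) = snd (inner z x) + snd (inner z y).
Proof. rewrite !(im_inner_sym _ z), im_inner_addl. ring. Qed.

Lemma re_inner_scall (a : Defs.C) (x y : H) :
  fst (inner (vscal a x) y) = fst a * fst (inner x y) - snd a * snd (inner x y).
Proof. rewrite inner_scal_l. reflexivity. Qed.

Lemma im_inner_scall (a : Defs.C) (x y : H) :
  snd (inner (vscal a x) y) = fst a * snd (inner x y) + snd a * fst (inner x y).
Proof. rewrite inner_scal_l. reflexivity. Qed.

Lemma re_inner_scalr (a : Defs.C) (x y : H) :
  fst (inner x (vscal a y)) = fst a * fst (inner x y) + snd a * snd (inner x y).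
Proof. rewrite re_inner_sym, re_inner_scall, (re_inner_sym x), (im_inner_sym x). ring. Qed.

Lemma im_inner_scalr (a : Defs.C) (x y : H) :
  snd (inner x (vscal a y)) = fst a * snd (inner x y) - snd a * fst (inner x y).
Proof. rewrite im_inner_sym, im_inner_scall, (re_inner_sym x), (im_inner_sym x). ring. Qed.

Lemma re_inner0l (y : H) : fst (inner vzero y) = 0.
Proof. pose proof (re_inner_addl vzero vzero y) as h. rewrite vadd_0 in h. lra. Qed.

Lemma im_inner0l (y : H) : snd (inner vzero y) = 0.
Proof. pose proof (im_inner_addl vzero vzero y) as h. rewrite vadd_0 in h. lra. Qed.

Lemma re_inner_oppl (x y : H) : fst (inner (vopp x) y) = - fst (inner x y).
Proof.
  pose proof (re_inner_addl x (vopp x) y) as h. rewrite vadd_opp, re_inner0l in h. lra.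
Qed.

Lemma im_inner_oppl (x y : H) : snd (inner (vopp x) y) = - snd (inner x y).
Proof.
  pose proof (im_inner_addl x (vopp x) y) as h. rewrite vadd_opp, im_inner0l in h. lra.
Qed.

Lemma re_inner_oppr (x y : H) : fst (inner y (vopp x)) = - fst (inner y x).
Proof. rewrite !(re_inner_sym _ y). apply re_inner_oppl. Qed.

Lemma im_inner_oppr (x y : H) : snd (inner y (vopp x)) = - snd (inner y x).
Proof. rewrite !(im_inner_sym _ y), im_inner_oppl. ring. Qed.

Ltac inner_expand :=
  repeat rewrite ?re_inner_addl, ?im_inner_addl, ?re_inner_addr, ?im_inner_addr,
    ?re_inner_scall, ?im_inner_scall, ?re_inner_scalr, ?im_inner_scalr,
    ?re_inner_oppl, ?im_inner_oppl, ?re_inner_oppr, ?im_inner_oppr;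
  cbn [fst snd].

Lemma re_inner_self_ge0 (x : H) : 0 <= fst (inner x x).
Proof. exact (inner_pos H x). Qed.

Lemma vnorm_sqr (x : H) : vnorm x ^ 2 = fst (inner x x).
Proof. apply pow2_sqrt, re_inner_self_ge0. Qed.

Lemma vnorm_ge0 (x : H) : 0 <= vnorm x.
Proof. apply sqrt_pos. Qed.

Lemma re_inner_unit (x : H) : vnorm x = 1 -> fst (inner x x) = 1.
Proof. intros hx. rewrite <- vnorm_sqr, hx. ring. Qed.

Lemma eq0_of_re_inner_self (x : H) : fst (inner x x) = 0 -> x = vzero.
Proof.
  intros hx. apply inner_definite. pose proof (im_inner_sym x x) as him.
  destruct (inner x x) as [p q]. cbn in *. unfold C0. f_equal; lra.
Qed.

Lemma re_inner_opnorm_le (T : H -> H) (n : R) : is_opnorm T n ->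
  forall x, vnorm x = 1 -> fst (inner (T x) (T x)) <= n ^ 2.
Proof.
  intros [ub _] x hx. pose proof (ub _ (ex_intro _ x (conj hx eq_refl))) as h.
  pose proof (vnorm_ge0 (T x)). rewrite <- vnorm_sqr. nra.
Qed.

Lemma vnorm_le_of_re_inner_le (y : H) (c : R) : 0 <= c ->
  fst (inner y y) <= c ^ 2 -> vnorm y <= c.
Proof. intros c_ge0 hy. rewrite <- vnorm_sqr in hy. pose proof (vnorm_ge0 y). nra. Qed.

Section NumericalRadius.
Variables (A : H -> H) (w : R).
Hypotheses (linA : is_linear A) (numradA : is_numrad A w).

Lemma numrad_ge0 (x : H) : vnorm x = 1 -> 0 <= w.
Proof.
  intros hx. pose proof (proj1 numradA _ (ex_intro _ x (conj hx eq_refl))).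
  pose proof (Cmod_bounds_fst (inner (A x) x)). lra.
Qed.

(* The defining bound of ω(A), extended from unit vectors to all vectors by
   rescaling. *)
Lemma numrad_form_bounds (z : H) :
  - w * fst (inner z z) <= fst (inner (A z) z) <= w * fst (inner z z) /\
  - w * fst (inner z z) <= snd (inner (A z) z) <= w * fst (inner z z).
Proof.
  set (n := fst (inner z z)).
  destruct (Req_dec n 0) as [n_eq0|n_neq0].
  { rewrite n_eq0, (eq0_of_re_inner_self z n_eq0), re_inner_sym, im_inner_sym,
      re_inner0l, im_inner0l. lra. }
  assert (n_gt0 : 0 < n) by (pose proof (re_inner_self_ge0 z : 0 <= n); lra).
  set (r := sqrt n).
  assert (r_gt0 : 0 < r) by (apply sqrt_lt_R0; lra).
  assert (rr : r * r = n) by (apply sqrt_sqrt; lra).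
  set (u := vscal (/ r, 0) z).
  assert (u_unit : vnorm u = 1).
  { unfold vnorm, Cre, u. inner_expand. fold n.
    replace (/ r * (/ r * n + 0 * snd (inner z z)) - 0 * (/ r * snd (inner z z) - 0 * n))
      with 1 by (rewrite <- rr; field; lra).
    apply sqrt_1. }
  pose proof (proj1 numradA _ (ex_intro _ u (conj u_unit eq_refl))) as hu.
  pose proof (Cmod_bounds_fst (inner (A u) u)) as hre.
  pose proof (Cmod_bounds_snd (inner (A u) u)) as him.
  unfold u in hu, hre, him. rewrite (proj2 linA) in hu, hre, him.
  revert hre him. inner_expand. intros hre him.
  set (F := fst (inner (A z) z)) in *. set (G := snd (inner (A z) z)) in *.
  replace (/ r * (/ r * F + 0 * G) - 0 * (/ r * G - 0 * F)) with (F / n) in hre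
    by (rewrite <- rr; field; lra).
  replace (/ r * (/ r * G - 0 * F) + 0 * (/ r * F + 0 * G)) with (G / n) in him
    by (rewrite <- rr; field; lra).
  replace F with (F / n * n) by (field; lra). replace G with (G / n * n) by (field; lra).
  split; split; nra.
Qed.

(* Polarization: evaluate the form at x + y and x - y. *)
Lemma numrad_polar_bounds (x y : H) :
  let b := w * (2 * fst (inner x x) + 2 * fst (inner y y)) in
  - b <= 2 * fst (inner (A x) y) + 2 * fst (inner (A y) x) <= b /\
  - b <= 2 * snd (inner (A x) y) + 2 * snd (inner (A y) x) <= b.
Proof.
  destruct (numrad_form_bounds (vadd x y)) as [plus_re plus_im].
  destruct (numrad_form_bounds (vadd x (vscal (-1, 0) y))) as [minus_re minus_im].
  rewrite !(proj1 linA), !(proj2 linA) in *.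
  revert plus_re plus_im minus_re minus_im. inner_expand. cbn. lra.
Qed.

End NumericalRadius.

(* Test the symmetrized bound at y = t S x and optimize over t. *)
Lemma re_inner_part_le (S : H -> H) (f : H -> H -> R) (w : R) : 0 <= w ->
  (forall x y, 4 * fst (inner (S x) y) = 2 * f x y + 2 * f y x) ->
  (forall x y, let b := w * (2 * fst (inner x x) + 2 * fst (inner y y)) in
     - b <= 2 * f x y + 2 * f y x <= b) ->
  forall x, vnorm x = 1 -> fst (inner (S x) (S x)) <= w ^ 2.
Proof.
  intros w_ge0 hS hf x hx. apply le_sqr_of_forall_quadratic; auto.
  { apply re_inner_self_ge0. }
  intros t. pose proof (hf x (vscal (t, 0) (S x))) as hb. cbv zeta in hb.
  rewrite <- hS, (re_inner_unit x hx) in hb. revert hb. inner_expand. nra.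
Qed.

Section CartesianDecomposition.
Variables A As : H -> H.
Hypothesis adjA : is_adjoint A As.

Lemma Cinv_2i : Cinv (Cmul (RtoC 2) Ci) = (0, - / 2).
Proof. unfold Cinv, Cmul, RtoC, Ci. cbn [fst snd]. f_equal; field. Qed.

Lemma re_inner_realpart (x y : H) :
  4 * fst (inner (realpart A As x) y) = 2 * fst (inner (A x) y) + 2 * fst (inner (A y) x).
Proof.
  unfold realpart, RtoC. inner_expand. rewrite (re_inner_sym y (As x)), <- adjA. lra.
Qed.

Lemma re_inner_imagpart (x y : H) :
  4 * fst (inner (imagpart A As x) y) = 2 * snd (inner (A x) y) + 2 * snd (inner (A y) x).
Proof.
  unfold imagpart, vsub. rewrite Cinv_2i. inner_expand.
  rewrite (im_inner_sym y (As x)), <- adjA. lra.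
Qed.

Lemma re_inner_realpart_le (w : R) : is_linear A -> is_numrad A w ->
  forall x, vnorm x = 1 -> fst (inner (realpart A As x) (realpart A As x)) <= w ^ 2.
Proof.
  intros linA hw x hx. apply (re_inner_part_le _ (fun x y => fst (inner (A x) y))).
  - exact (numrad_ge0 A w hw x hx).
  - exact re_inner_realpart.
  - intros y z. exact (proj1 (numrad_polar_bounds A w linA hw y z)).
  - exact hx.
Qed.

Lemma re_inner_imagpart_le (w : R) : is_linear A -> is_numrad A w ->
  forall x, vnorm x = 1 -> fst (inner (imagpart A As x) (imagpart A As x)) <= w ^ 2.
Proof.
  intros linA hw x hx. apply (re_inner_part_le _ (fun x y => snd (inner (A x) y))).
  - exact (numrad_ge0 A w hw x hx).
  - exact re_inner_imagpart.
  - intros y z. exact (proj2 (numrad_polar_bounds A w linA hw y z)).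
  - exact hx.
Qed.

Lemma re_inner_add_adjoint (x : H) :
  fst (inner (A x) (A x)) + fst (inner (As x) (As x)) =
  2 * fst (inner (realpart A As x) (realpart A As x)) +
  2 * fst (inner (imagpart A As x) (imagpart A As x)).
Proof. unfold realpart, imagpart, vsub. rewrite Cinv_2i. unfold RtoC. inner_expand. lra. Qed.

Lemma re_inner_adjoint_ge (Ainv : H -> H) (nAinv : R) :
  (forall x, A (Ainv x) = x) -> is_opnorm Ainv nAinv ->
  forall x, vnorm x = 1 -> / (nAinv ^ 2) <= fst (inner (As x) (As x)).
Proof.
  intros AAinv hnAinv x hx.
  pose proof (re_inner_opnorm_le Ainv nAinv hnAinv x hx) as hAinv.
  assert (h1 : fst (inner (Ainv x) (As x)) = 1)
    by (rewrite <- adjA, AAinv; exact (re_inner_unit x hx)).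
  apply inv_le_of_forall_quadratic; [apply pow2_ge_0|]. intros s s_gt0.
  (* expand 0 <= ‖s Ainv x - As x‖² *)
  pose proof (re_inner_self_ge0 (vadd (vscal (s, 0) (Ainv x)) (vscal (-1, 0) (As x)))) as h.
  revert h. inner_expand. rewrite (re_inner_sym (Ainv x) (As x)). nra.
Qed.

End CartesianDecomposition.
End InnerProduct.

Theorem corollary2p3 (H : PreHilbert) (Hcomplete : complete H)
  (A As Ainv : H -> H)
  (nA nAinv nA1 nA2 w : R) :
  bounded_op A ->
  is_adjoint A As ->
  bounded_op Ainv ->
  (forall x, Ainv (A x) = x) ->
  (forall x, A (Ainv x) = x) ->
  is_opnorm A nA ->
  is_opnorm Ainv nAinv ->
  is_opnorm (realpart A As) nA1 ->
  is_opnorm (imagpart A As) nA2 ->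
  is_numrad A w ->
  2 * Rmin (nA1 ^ 2) (nA2 ^ 2) <= / (nAinv ^ 2) ->
  nA <= sqrt 2 * w.
Proof.
  intros [linA _] adjA _ _ AAinv hnA hnAinv hnA1 hnA2 hw hD.
  apply (proj2 hnA). intros r [x [hx ->]].
  pose proof (numrad_ge0 A w hw x hx) as w_ge0.
  pose proof (re_inner_add_adjoint A As x) as hcart.
  pose proof (re_inner_adjoint_ge A As adjA Ainv nAinv AAinv hnAinv x hx) as hadj.
  pose proof (re_inner_opnorm_le _ _ hnA1 x hx) as hR1.
  pose proof (re_inner_opnorm_le _ _ hnA2 x hx) as hR2.
  pose proof (re_inner_realpart_le A As adjA w linA hw x hx) as hR1w.
  pose proof (re_inner_imagpart_le A As adjA w linA hw x hx) as hR2w.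
  apply vnorm_le_of_re_inner_le.
  { pose proof (sqrt_pos 2). nra. }
  rewrite Rpow_mult_distr, pow2_sqrt by lra.
  revert hD. apply Rmin_case_strong; intros; lra.
Qed.
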